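(* The assignment $S\mapsto \mathbf{H}(S)$ on objects and $\varphi\mapsto\mathbf{H}(\varphi)$ (restriction of $\varphi$ to $S$) on morphisms is a functor from the category of finite association schemes with admissible morphisms to the category of finite hypergroups with hypergroup homomorphisms.
   Context: For a nonempty set $X$: $1_X=\{(x,x):x\in X\}$; for $p\subseteq X\times X$, $p^*=\{(a,b):(b,a)\in p\}$ and $xp=\{y\in X:(x,y)\in p\}$. An association scheme on $X$ is a partition $S$ of $X\times X$ with $1_X\in S$, $p^*\in S$ whenever $p\in S$, and such that for all $p,q,r\in S$ there is a cardinal $a_{pq}^r$ with $|yp\cap zq^*|=a_{pq}^r$ for all $y\in X$, $z\in yr$; it is finite if $X$ is finite. Complex multiplication: $pq=\{r\in S:a_{pq}^r\ge1\}$. $\mathbf{H}(S)$ is the hypergroup on $S$ with hyperoperation complex multiplication, identity $1_X$, inverse $p^*$. A hypergroup is a nonempty set $H$ with $*:H\times H\to P^*(H)$ (nonempty subsets), extended to subsets by unions, that is associative, has a unique identity $e$ ($e*x=x*e=\{x\}$), unique inverses $f^{-1}$ with $e\in(f^{-1}*f)\cap(f*f^{-1})$, and satisfies reversibility ($c\in a*b\Rightarrow a\in c*b^{-1}$ and $b\in a^{-1}*c$). A hypergroup homomorphism $f$ satisfies $f(a*b)\subseteq f(a)*f(b)$. A morphism of association schemes $S$ on $X$ to $T$ on $Y$ is $f:X\cup S\to Y\cup T$ with $f(X)\subseteq Y$, $f(S)\subseteq T$, and $(f(x),f(y))\in f(p)$ for all $(x,y)\in p\in S$; it is admissible if whenever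 $(f(x),y)\in f(p)$ ($x\in X,y\in Y,p\in S$) there is $z\in X$ with $(x,z)\in p$ and $f(z)=y$. *)

From mathcomp Require Import all_boot.
Set Implicit Arguments. Unset Strict Implicit. Unset Printing Implicit Defensive.

Section Hypergroup.
Variable U : finType.

Definition setop (op : U -> U -> {set U}) (B C : {set U}) : {set U} :=
  \bigcup_(b in B) \bigcup_(c in C) op b c.

Definition is_hypergroup (A : {set U}) (op : U -> U -> {set U}) (e : U)
    (inv : U -> U) : Prop :=
  [/\ A != set0,
      {in A &, forall a b, op a b \subset A /\ op a b != set0},
      {in A & &, forall a b c, setop op (op a b) [set c] = setop op [set a] (op b c)},
      (e \in A /\ {in A, forall x, op e x = [set x] /\ op x e = [set x]}
      /\ {in A, forall e', {in A, forall x, op e' x = [set x] /\ op x e' = [set x]}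
                           -> e' = e}) /\
      ({in A, forall f, inv f \in A /\ e \in op (inv f) f :&: op f (inv f)}
      /\ {in A &, forall f g, e \in op g f :&: op f g -> g = inv f}) &
      {in A & &, forall a b c, c \in op a b -> a \in op c (inv b) /\ b \in op (inv a) c}].

End Hypergroup.

Definition is_hyp_hom (U V : finType) (A : {set U}) (op : U -> U -> {set U})
    (B : {set V}) (op' : V -> V -> {set V}) (f : U -> V) : Prop :=
  {in A, forall a, f a \in B} /\
  {in A &, forall a b, f @: op a b \subset op' (f a) (f b)}.

Section Scheme.
Variable X : finType.

Definition diagX : {set X * X} := [set xy | xy.1 == xy.2].
Definition transp (p : {set X * X}) : {set X * X} := [set xy | (xy.2, xy.1) \in p].
Definition nbhd (p : {set X * X}) (x : X) : {set X} := [set y | (x, y) \in p].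

Definition inter_count (p q : {set X * X}) (y z : X) : nat :=
  #|nbhd p y :&: nbhd (transp q) z|.

Definition is_scheme (S : {set {set X * X}}) : Prop :=
  [/\ 0 < #|X|,
      partition S [set: X * X],
      diagX \in S,
      {in S, forall p, transp p \in S} &
      {in S & &, forall p q r : {set X * X}, exists a : nat,
          forall y z, (y, z) \in r -> inter_count p q y z = a}].

(* the intersection number a_pq^r (read off at any pair of r) *)
Definition inum (p q r : {set X * X}) : nat :=
  if [pick yz in r] is Some yz then inter_count p q yz.1 yz.2 else 0.

Definition cmul (S : {set {set X * X}}) (p q : {set X * X}) : {set {set X * X}} :=
  [set r in S | 0 < inum p q r].

End Scheme.

(* A morphism S -> T is a map f : X ∪ S -> Y ∪ T, given as its two components. *)
Definition is_scheme_morphism (X Y : finType) (S : {set {set X * X}})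
    (T : {set {set Y * Y}}) (fX : X -> Y) (fS : {set X * X} -> {set Y * Y}) : Prop :=
  {in S, forall p, fS p \in T} /\
  {in S, forall p : {set X * X}, forall x y, (x, y) \in p -> (fX x, fX y) \in fS p}.

Definition is_admissible (X Y : finType) (S : {set {set X * X}})
    (fX : X -> Y) (fS : {set X * X} -> {set Y * Y}) : Prop :=
  forall x y p, p \in S -> (fX x, y) \in fS p -> exists2 z, (x, z) \in p & fX z = y.

From mathcomp Require Import all_boot.
Set Implicit Arguments. Unset Strict Implicit. Unset Printing Implicit Defensive.

(* Since the relations of a scheme partition X x X and have constant
   intersection numbers on each block, r lies in the complex product pq as
   soon as a single pair (x, z) of r is joined by a p-step followed by a
   q-step, and then every pair of r is.  Every hypergroup axiom for H(S)
   thereby becomes a statement about paths in X: the diagonal is a neutral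
   relation, transposition reverses paths, and associativity composes them.
   A morphism of schemes maps paths to paths, so f(pq) is contained in
   f(p)f(q). *)

Lemma setop_set1l (U : finType) (op : U -> U -> {set U}) a (B : {set U}) :
  setop op [set a] B = \bigcup_(b in B) op a b.
Proof. by rewrite /setop big_set1. Qed.

Lemma setop_set1r (U : finType) (op : U -> U -> {set U}) (A : {set U}) c :
  setop op A [set c] = \bigcup_(a in A) op a c.
Proof. by apply: eq_bigr => a _; rewrite big_set1. Qed.

Section SchemeRelations.
Variables (X : finType) (S : {set {set X * X}}).
Hypothesis schemeS : is_scheme S.

Lemma scheme_diag : diagX X \in S.
Proof. by case: schemeS. Qed.

Lemma scheme_transp p : p \in S -> transp p \in S.
Proof. by case: schemeS => _ _ _ /(_ p). Qed.

Lemma mem_diagX u v : ((u, v) \in diagX X) = (u == v).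
Proof. by rewrite inE. Qed.

Lemma mem_transp (p : {set X * X}) u v : ((u, v) \in transp p) = ((v, u) \in p).
Proof. by rewrite inE. Qed.

Lemma scheme_cover u : exists2 r, r \in S & u \in r.
Proof.
case: schemeS => _ /and3P [/eqP coverS _ _] _ _ _.
have : u \in cover S by rewrite coverS inE.
by case/bigcupP=> r; exists r.
Qed.

Lemma scheme_block_eq r s u : r \in S -> s \in S -> u \in r -> u \in s -> r = s.
Proof.
case: schemeS => _ /and3P [_ trivS _] _ _ _ Sr Ss ur us.
by rewrite -(def_pblock trivS Sr ur) (def_pblock trivS Ss us).
Qed.

Lemma scheme_block_neq0 r : r \in S -> exists u, u \in r.
Proof.
case: schemeS => _ /and3P [_ _ S0] _ _ _ Sr.
by apply/set0Pn; apply: contraNneq S0 => <-.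
Qed.

Lemma inumE p q r x z : p \in S -> q \in S -> r \in S -> (x, z) \in r ->
  inum p q r = inter_count p q x z.
Proof.
case: schemeS => _ _ _ _ constS Sp Sq Sr xz_r.
have [a inter_a] := constS p q r Sp Sq Sr.
rewrite /inum; case: pickP => [[y w] yw_r | r0]; last by rewrite r0 in xz_r.
by rewrite /= (inter_a _ _ yw_r) (inter_a _ _ xz_r).
Qed.

Lemma inter_count_gt0P (p q : {set X * X}) x z :
  reflect (exists y, (x, y) \in p /\ (y, z) \in q) (0 < inter_count p q x z).
Proof.
rewrite card_gt0; apply: (iffP (set0Pn _)) => [[y] | [y [xy yz]]].
  by rewrite !inE => /andP [xy yz]; exists y.
by exists y; rewrite !inE xy.
Qed.

Lemma cmulP p q r x z : p \in S -> q \in S -> r \in S -> (x, z) \in r ->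
  reflect (exists y, (x, y) \in p /\ (y, z) \in q) (r \in cmul S p q).
Proof.
move=> Sp Sq Sr xz_r; rewrite inE Sr (inumE Sp Sq Sr xz_r).
exact: inter_count_gt0P.
Qed.

Lemma cmul_sub p q r : r \in cmul S p q -> r \in S.
Proof. by rewrite inE => /andP []. Qed.

Lemma cmul_path p q r : p \in S -> q \in S -> r \in cmul S p q ->
  exists x y z, [/\ (x, y) \in p, (y, z) \in q & (x, z) \in r].
Proof.
move=> Sp Sq pq_r; have Sr := cmul_sub pq_r.
have [[x z] xz_r] := scheme_block_neq0 Sr.
have [y [xy yz]] := cmulP Sp Sq Sr xz_r pq_r.
by exists x, y, z.
Qed.

Lemma mem_cmul p q r x y z : p \in S -> q \in S -> r \in S ->
  (x, y) \in p -> (y, z) \in q -> (x, z) \in r -> r \in cmul S p q.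
Proof. by move=> Sp Sq Sr xy yz xz; apply/(cmulP Sp Sq Sr xz); exists y. Qed.

(* The intersection number a_{p p*}^{1_X} is the valency of p, the same at
   every point; it is positive because p is nonempty. *)
Lemma scheme_total p y : p \in S -> exists z, (y, z) \in p.
Proof.
move=> Sp; have Spt := scheme_transp Sp.
have [[y0 z0] yz0] := scheme_block_neq0 Sp.
have diag_y u : (u, u) \in diagX X by rewrite mem_diagX.
have : 0 < inter_count p (transp p) y y.
  rewrite -(inumE Sp Spt scheme_diag (diag_y y)).
  rewrite (inumE Sp Spt scheme_diag (diag_y y0)).
  by apply/inter_count_gt0P; exists z0; rewrite mem_transp.
by case/inter_count_gt0P=> z [yz _]; exists z.
Qed.

Lemma cmul_neq0 p q : p \in S -> q \in S -> cmul S p q != set0.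
Proof.
move=> Sp Sq; have [[x y] xy] := scheme_block_neq0 Sp.
have [z yz] := scheme_total y Sq; have [r Sr xz] := scheme_cover (x, z).
by apply/set0Pn; exists r; apply: (mem_cmul Sp Sq Sr xy yz xz).
Qed.

Lemma cmul1r p : p \in S -> cmul S (diagX X) p = [set p].
Proof.
move=> Sp; apply/setP => r; rewrite in_set1; apply/idP/eqP => [dp_r | ->].
  have [x [y [z [/[!mem_diagX] /eqP <- xz xz_r]]]] := cmul_path scheme_diag Sp dp_r.
  exact: scheme_block_eq (cmul_sub dp_r) Sp xz_r xz.
have [[x z] xz] := scheme_block_neq0 Sp.
by apply: (mem_cmul scheme_diag Sp Sp _ xz xz); rewrite mem_diagX.
Qed.

Lemma cmulr1 p : p \in S -> cmul S p (diagX X) = [set p].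
Proof.
move=> Sp; apply/setP => r; rewrite in_set1; apply/idP/eqP => [pd_r | ->].
  have [x [y [z [xy /[!mem_diagX] /eqP <- xy_r]]]] := cmul_path Sp scheme_diag pd_r.
  exact: scheme_block_eq (cmul_sub pd_r) Sp xy_r xy.
have [[x z] xz] := scheme_block_neq0 Sp.
by apply: (mem_cmul Sp scheme_diag Sp xz _ xz); rewrite mem_diagX.
Qed.

Lemma cmul1_uniq e : e \in S ->
  {in S, forall p, cmul S e p = [set p] /\ cmul S p e = [set p]} -> e = diagX X.
Proof.
move=> Se /(_ _ scheme_diag) [ed_e _].
by apply/set1P; rewrite -ed_e cmulr1 ?set11.
Qed.

Lemma diag_cmul_transp p : p \in S -> diagX X \in cmul S (transp p) p :&: cmul S p (transp p).
Proof.
move=> Sp; have Spt := scheme_transp Sp.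
have [[x y] xy] := scheme_block_neq0 Sp.
have diag_x u : (u, u) \in diagX X by rewrite mem_diagX.
apply/setIP; split.
  by apply: (mem_cmul Spt Sp scheme_diag _ xy (diag_x y)); rewrite mem_transp.
by apply: (mem_cmul Sp Spt scheme_diag xy _ (diag_x x)); rewrite mem_transp.
Qed.

Lemma transp_uniq p q : p \in S -> q \in S ->
  diagX X \in cmul S q p :&: cmul S p q -> q = transp p.
Proof.
move=> Sp Sq /setIP [qp_d _].
have [x [y [z [xy yz /[!mem_diagX] /eqP xz]]]] := cmul_path Sq Sp qp_d.
by apply: (scheme_block_eq Sq (scheme_transp Sp) xy); rewrite mem_transp xz.
Qed.

Lemma cmul_reversible p q r : p \in S -> q \in S -> r \in S -> r \in cmul S p q ->
  p \in cmul S r (transp q) /\ q \in cmul S (transp p) r.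
Proof.
move=> Sp Sq Sr pq_r; have [x [y [z [xy yz xz]]]] := cmul_path Sp Sq pq_r.
split.
  by apply: (mem_cmul Sr (scheme_transp Sq) Sp xz _ xy); rewrite mem_transp.
by apply: (mem_cmul (scheme_transp Sp) Sr Sq _ xz yz); rewrite mem_transp.
Qed.

Lemma cmul3lP p q s t x z : p \in S -> q \in S -> s \in S -> t \in S -> (x, z) \in t ->
  reflect (exists y w, [/\ (x, y) \in p, (y, w) \in q & (w, z) \in s])
          (t \in \bigcup_(r in cmul S p q) cmul S r s).
Proof.
move=> Sp Sq Ss St xz_t; apply: (iffP bigcupP) => [[r pq_r rs_t] | [y [w [xy yw wz]]]].
  have Sr := cmul_sub pq_r.
  have [w [xw wz]] := cmulP Sr Ss St xz_t rs_t.
  have [y [xy yw]] := cmulP Sp Sq Sr xw pq_r.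
  by exists y, w.
have [r Sr xw] := scheme_cover (x, w).
exists r; first exact: mem_cmul Sp Sq Sr xy yw xw.
exact: mem_cmul Sr Ss St xw wz xz_t.
Qed.

Lemma cmul3rP p q s t x z : p \in S -> q \in S -> s \in S -> t \in S -> (x, z) \in t ->
  reflect (exists y w, [/\ (x, y) \in p, (y, w) \in q & (w, z) \in s])
          (t \in \bigcup_(r in cmul S q s) cmul S p r).
Proof.
move=> Sp Sq Ss St xz_t; apply: (iffP bigcupP) => [[r qs_r pr_t] | [y [w [xy yw wz]]]].
  have Sr := cmul_sub qs_r.
  have [y [xy yz]] := cmulP Sp Sr St xz_t pr_t.
  have [w [yw wz]] := cmulP Sq Ss Sr yz qs_r.
  by exists y, w.
have [r Sr yz] := scheme_cover (y, z).
exists r; first exact: mem_cmul Sq Ss Sr yw wz yz.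
exact: mem_cmul Sp Sr St xy yz xz_t.
Qed.

Lemma cmulA p q s : p \in S -> q \in S -> s \in S ->
  setop (cmul S) (cmul S p q) [set s] = setop (cmul S) [set p] (cmul S q s).
Proof.
move=> Sp Sq Ss; rewrite setop_set1r setop_set1l; apply/setP => t.
case St: (t \in S); last by apply/idP/idP => /bigcupP [r _ /cmul_sub]; rewrite St.
have [[x z] xz_t] := scheme_block_neq0 St.
by apply/(cmul3lP Sp Sq Ss St xz_t)/(cmul3rP Sp Sq Ss St xz_t).
Qed.

Lemma scheme_hypergroup : is_hypergroup S (cmul S) (diagX X) (@transp X).
Proof.
split.
- by apply/set0Pn; exists (diagX X); exact: scheme_diag.
- by move=> p q Sp Sq; split; [apply/subsetP => r /cmul_sub | apply: cmul_neq0].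
- exact: cmulA.
- split; split.
  + exact: scheme_diag.
  + split; first by move=> p Sp; rewrite cmul1r ?cmulr1.
    by move=> e Se /cmul1_uniq; apply.
  + by move=> p Sp; split; [apply: scheme_transp | apply: diag_cmul_transp].
  + exact: transp_uniq.
- exact: cmul_reversible.
Qed.

End SchemeRelations.

Lemma scheme_morphism_hyp_hom (X Y : finType) (S : {set {set X * X}})
    (T : {set {set Y * Y}}) (fX : X -> Y) (fS : {set X * X} -> {set Y * Y}) :
  is_scheme S -> is_scheme T -> is_scheme_morphism S T fX fS ->
  is_hyp_hom S (cmul S) T (cmul T) fS.
Proof.
move=> schemeS schemeT [fST f_pair]; split=> // p q Sp Sq.
apply/subsetP => _ /imsetP [r pq_r ->]; have Sr := cmul_sub pq_r.
have [x [y [z [xy yz xz]]]] := cmul_path schemeS Sp Sq pq_r.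
exact: (mem_cmul schemeT (fST _ Sp) (fST _ Sq) (fST _ Sr)
  (f_pair _ Sp _ _ xy) (f_pair _ Sq _ _ yz) (f_pair _ Sr _ _ xz)).
Qed.

Section MorphismCategory.
Variables (X Y Z : finType) (S : {set {set X * X}}) (T : {set {set Y * Y}})
  (W : {set {set Z * Z}}).

Lemma id_scheme_morphism : is_scheme_morphism S S id id.
Proof. by split. Qed.

Lemma id_admissible : is_admissible S (@id X) id.
Proof. by move=> x y p _ xy; exists y. Qed.

Variables (fX : X -> Y) (fS : {set X * X} -> {set Y * Y}).
Variables (gX : Y -> Z) (gS : {set Y * Y} -> {set Z * Z}).

Lemma comp_scheme_morphism :
  is_scheme_morphism S T fX fS -> is_scheme_morphism T W gX gS ->
  is_scheme_morphism S W (gX \o fX) (gS \o fS).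
Proof.
move=> [fST f_pair] [gTW g_pair]; split=> [p Sp | p Sp x y xy].
  exact/gTW/fST.
exact/g_pair/f_pair/xy/Sp/fST.
Qed.

Lemma comp_admissible : is_scheme_morphism S T fX fS ->
  is_admissible S fX fS -> is_admissible T gX gS ->
  is_admissible S (gX \o fX) (gS \o fS).
Proof.
move=> [fST _] f_adm g_adm x z p Sp /= gfxz.
have [y fxy <-] := g_adm _ _ _ (fST _ Sp) gfxz.
have [w xw <-] := f_adm _ _ _ Sp fxy.
by exists w.
Qed.

End MorphismCategory.

Theorem corollary3p2 :
  (* object part: H(S) is a hypergroup *)
  (forall (X : finType) (S : {set {set X * X}}),
      is_scheme S -> is_hypergroup S (cmul S) (diagX X) (@transp X))
  /\
  (* morphism part: the restriction of an admissible morphism to S is a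
     hypergroup homomorphism H(S) -> H(T) *)
  (forall (X Y : finType) (S : {set {set X * X}}) (T : {set {set Y * Y}})
          (fX : X -> Y) (fS : {set X * X} -> {set Y * Y}),
      is_scheme S -> is_scheme T ->
      is_scheme_morphism S T fX fS -> is_admissible S fX fS ->
      is_hyp_hom S (cmul S) T (cmul T) fS)
  /\
  (* functoriality: identities and composites *)
  (forall (X : finType) (S : {set {set X * X}}), is_scheme S ->
      is_scheme_morphism S S id id /\ is_admissible S (@id X) id)
  /\
  (forall (X Y Z : finType) (S : {set {set X * X}}) (T : {set {set Y * Y}})
          (W : {set {set Z * Z}})
          (fX : X -> Y) (fS : {set X * X} -> {set Y * Y})
          (gX : Y -> Z) (gS : {set Y * Y} -> {set Z * Z}),
      is_scheme S -> is_scheme T -> is_scheme W ->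
      is_scheme_morphism S T fX fS -> is_admissible S fX fS ->
      is_scheme_morphism T W gX gS -> is_admissible T gX gS ->
      is_scheme_morphism S W (gX \o fX) (gS \o fS) /\ is_admissible S (gX \o fX) (gS \o fS)
      /\ {in S, forall p, (gS \o fS) p = gS (fS p)}).
Proof.
split; first exact: scheme_hypergroup.
split; first by move=> X Y S T fX fS schemeS schemeT fmor _;
  exact: scheme_morphism_hyp_hom schemeS schemeT fmor.
split; first by move=> X S _; split; [apply: id_scheme_morphism | apply: id_admissible].
move=> X Y Z S T W fX fS gX gS _ _ _ fmor f_adm gmor g_adm.
split; first exact: comp_scheme_morphism fmor gmor.
by split; [exact: comp_admissible fmor f_adm g_adm | move=> p].
Qed.
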